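(* Let $\ell$ be odd, $H=\mathbb{Z}_\ell$, let $X$ be a finite $s$-regular graph with a right action of $H$ that is free on vertices and on edges and such that no edge joins two vertices of the form $v$ and $vh$ ($h\in H$), let $L$ be a local code of block length $s$, and let $\Lambda$ be an $H$-invariant labeling. Let $C_\ell$ be the cycle graph with $\ell$ vertices and $\ell$ edges, with $H$ acting from the left by rotation. Then $$\dim H^h_1\big(C(X,L,\Lambda)\otimes_{H}C(C_\ell)\big)=\dim\ker\big(\partial: C_1(X/H)\to C_0(X/H)\otimes L_0\big),$$ i.e. the number of horizontal logical qubits of the balanced product code equals the number of bits encoded by the Tanner code $C(X/H,L,\bar\Lambda)$ on the quotient graph.
   Context: A local code is a two-term complex $L=(L_1\xrightarrow{\partial^L}L_0)$ of $\mathbb{F}_2$-vector spaces where $L_1=\mathbb{F}_2^s$ has a distinguished basis $\mathcal{B}$. For a vertex $v$ let $\delta v$ be the set of incident edges; a labeling is a family of bijections $\Lambda_v:\delta v\to\mathcal{B}$, and it is $H$-invariant if $\Lambda_{vh}(eh)=\Lambda_v(e)$ for all $v,e,h$. The Tanner code $C(X,L,\Lambda)$ is the two-term complex $C_1(X)=\mathbb{F}_2^{X^1}\xrightarrow{\partial}C_0(X)\otimes L_0$, $\partial e=v\otimes\partial^L\Lambda_v(e)+w\otimes\partial^L\Lambda_w(e)$ for an edge $e$ with endpoints $v,w$; $H$ acts on it from the right via its action on $X$ (trivially on $L_0$), by chain maps. The quotient graph $X/H$ has the $H$-orbits of vertices and edges as vertices and edges; it is $s$-regular and $\Lambda$ descends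 to a labeling $\bar\Lambda$ of $X/H$. $C(C_\ell)$ is the cellular chain complex $C_1(C_\ell)\to C_0(C_\ell)$ of the cycle graph over $\mathbb{F}_2$ (each edge maps to the sum of its two endpoints). For $V$ with right and $W$ with left $H$-action, $V\otimes_HW=(V\otimes W)/\langle vh\otimes w-v\otimes hw\rangle$. The balanced product complex $T=C(X,L,\Lambda)\otimes_HC(C_\ell)$ is the total complex with $T_2=C_1(X)\otimes_HC_1(C_\ell)$, $T_1=(C_1(X)\otimes_HC_0(C_\ell))\oplus((C_0(X)\otimes L_0)\otimes_HC_1(C_\ell))$, $T_0=(C_0(X)\otimes L_0)\otimes_HC_0(C_\ell)$ and differential induced by $\partial\otimes\operatorname{id}+\operatorname{id}\otimes\partial^{C_\ell}$. The horizontal homology $H^h_1(T)\subseteq H_1(T)$ is the subspace of classes admitting a representative of the form $(u,0)$ with $u\in C_1(X)\otimes_HC_0(C_\ell)$. *)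

From HB Require Import structures.
From mathcomp Require Import all_boot all_algebra.
Set Implicit Arguments. Unset Strict Implicit. Unset Printing Implicit Defensive.
Import GRing.Theory.

Definition F2 : finFieldType := 'F_2.

Local Open Scope ring_scope.

(* Graphs.  A finite (multi)graph is given by a finType V of vertices, a     *)
(* finType E of edges and a map [ends : E -> V * V] giving the two endpoints *)
(* of every edge (in an arbitrary order; the graph is undirected).          *)

Definition incident (V E : finType) (ends : E -> V * V) (v : V) : {set E} :=
  [set e | ((ends e).1 == v) || ((ends e).2 == v)].

Definition s_regular (V E : finType) (ends : E -> V * V) (s : nat) : Prop :=
  forall v : V, #|incident ends v| = s.

(* A labeling: for every v, lab v restricted to delta v is a bijection onto
   the distinguished basis 'I_s of L_1 = F_2^s. *)
Definition is_labeling (V E : finType) (ends : E -> V * V) (s : nat)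
    (lab : V -> E -> 'I_s) : Prop :=
  forall v : V,
    {in incident ends v &, injective (lab v)} /\
    (forall b : 'I_s, exists2 e, e \in incident ends v & lab v e = b).

(* Group H = Z_l with l = n.+1, realised as the cyclic group 'I_n.+1 with    *)
(* addition mod n.+1.  Right actions are maps act : T -> H -> T.             *)
Definition is_right_action (n : nat) (T : Type) (act : T -> 'I_n.+1 -> T) :=
  (forall x, act x 0 = x) /\ (forall x g h, act (act x g) h = act x (g + h)).

Definition free_action (n : nat) (T : Type) (act : T -> 'I_n.+1 -> T) :=
  forall x h, act x h = x -> h = 0.

Definition graph_action (n : nat) (V E : finType) (ends : E -> V * V)
    (actV : V -> 'I_n.+1 -> V) (actE : E -> 'I_n.+1 -> E) : Prop :=
  forall e h,
    ends (actE e h) = (actV (ends e).1 h, actV (ends e).2 h) \/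
    ends (actE e h) = (actV (ends e).2 h, actV (ends e).1 h).

Definition no_orbit_edge (n : nat) (V E : finType) (ends : E -> V * V)
    (actV : V -> 'I_n.+1 -> V) : Prop :=
  forall e h, (ends e).2 <> actV (ends e).1 h.

Definition H_invariant_labeling (n : nat) (V E : finType) (ends : E -> V * V)
    (actV : V -> 'I_n.+1 -> V) (actE : E -> 'I_n.+1 -> E) (s : nat)
    (lab : V -> E -> 'I_s) : Prop :=
  forall v e h, e \in incident ends v -> lab (actV v h) (actE e h) = lab v e.

(* Tanner code.  The local code L = (L_1 -> L_0) has L_1 = F_2^s with basis  *)
(* 'I_s, L_0 = 'rV[F2]_m, and boundary given by the s x m matrix D:          *)
(* del^L (b) = row b D.  C_0(X) (x) L_0 = {ffun V -> 'rV_m}.                *)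
(* tanner_bd x v = sum over edges e with endpoint v of x_e * del^L(lab v e), *)
(* i.e.  del e = v (x) del^L(Lambda_v e) + w (x) del^L(Lambda_w e).         *)
Definition tanner_bd (V E : finType) (ends : E -> V * V) (s m : nat)
    (D : 'M[F2]_(s, m)) (lab : V -> E -> 'I_s) (x : E -> F2) (v : V)
    : 'rV[F2]_m :=
  \sum_(e | (ends e).1 == v) x e *: row (lab v e) D +
  \sum_(e | (ends e).2 == v) x e *: row (lab v e) D.

Definition tanner_map (V E : finType) (ends : E -> V * V) (s m : nat)
    (D : 'M[F2]_(s, m)) (lab : V -> E -> 'I_s)
    : {ffun E -> F2^o} -> {ffun V -> 'rV[F2]_m} :=
  fun x => [ffun v => tanner_bd ends D lab (fun e => x e) v].

Definition orbit_of (n : nat) (T : finType) (act : T -> 'I_n.+1 -> T) (x : T)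
  : {set T} := [set act x h | h : 'I_n.+1].

Definition orbits_type (n : nat) (T : finType) (act : T -> 'I_n.+1 -> T) :=
  {S : {set T} | [exists x, S == orbit_of act x]}.

Section OrbitsFin.
Variables (n : nat) (T : finType) (act : T -> 'I_n.+1 -> T).
HB.instance Definition _ :=
  Finite.copy (orbits_type act) {S : {set T} | [exists x, S == orbit_of act x]}.
End OrbitsFin.

Definition orbit_rep (n : nat) (T : finType) (act : T -> 'I_n.+1 -> T)
    (q : orbits_type act) : T :=
  odflt (xchoose (existsP (valP q))) [pick x in val q].

Definition orbit_cls (n : nat) (T : finType) (act : T -> 'I_n.+1 -> T) (x : T)
  : orbits_type act :=
  exist _ (orbit_of act x) (introT existsP (ex_intro _ x (eqxx (orbit_of act x)))).

Definition quot_ends (n : nat) (V E : finType) (ends : E -> V * V)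
    (actV : V -> 'I_n.+1 -> V) (actE : E -> 'I_n.+1 -> E)
    (q : orbits_type actE) : orbits_type actV * orbits_type actV :=
  let e := orbit_rep q in
  (orbit_cls actV (ends e).1, orbit_cls actV (ends e).2).

(* descended labeling: Lambdabar_[v]([e]) = Lambda_v(e) for e incident to v *)
Definition quot_lab (n : nat) (V E : finType) (ends : E -> V * V)
    (actV : V -> 'I_n.+1 -> V) (actE : E -> 'I_n.+1 -> E) (s : nat)
    (lab : V -> E -> 'I_s) (S : orbits_type actV) (q : orbits_type actE)
    : 'I_s :=
  let e := orbit_rep q in
  if orbit_cls actV (ends e).1 == S then lab (ends e).1 e
  else lab (ends e).2 e.

(* The cycle graph C_l (l = n.+1): vertices 'I_l, edges 'I_l, edge j joins   *)
(* j and j+1; H acts on the left by rotation h . j = h + j.  Chains are      *)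
(* identified with functions, and tensor products of spaces of functions on  *)
(* finite sets with functions on the product.                               *)
(*   P2 = C_1(X) (x) C_1(C_l)           = {ffun E * 'I_l -> F2}             *)
(*   P1 = C_1(X) (x) C_0(C_l)  (+)  (C_0(X) (x) L_0) (x) C_1(C_l)           *)
(*   P0 = (C_0(X) (x) L_0) (x) C_0(C_l) = {ffun V * 'I_l -> 'rV_m}          *)
(* and T_i = P_i / R_i where R_i is the span of the balancing relations      *)
(* (x h) (x) y - x (x) (h y).                                               *)
Section BalancedProduct.
Variables (n : nat) (V E : finType) (ends : E -> V * V)
  (actV : V -> 'I_n.+1 -> V) (actE : E -> 'I_n.+1 -> E)
  (s m : nat) (D : 'M[F2]_(s, m)) (lab : V -> E -> 'I_s).

Local Notation I := 'I_n.+1.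
Definition P2 := {ffun (E * I)%type -> F2^o}.
Definition P1a := {ffun (E * I)%type -> F2^o}.
Definition P1b := {ffun (V * I)%type -> 'rV[F2]_m}.
Definition P1 := (P1a * P1b)%type.
Definition P0 := {ffun (V * I)%type -> 'rV[F2]_m}.

Definition relE (p : (E * I * I)%type) : {ffun (E * I)%type -> F2^o} :=
  let: (e, j, h) := p in
  [ffun q => ((q == (actE e h, j))%:R - (q == (e, h + j))%:R : F2)].
Definition relV (p : (V * I * I * 'rV[F2]_m)%type) : {ffun (V * I)%type -> 'rV[F2]_m} :=
  let: (v, j, h, l) := p in
  [ffun q => (q == (actV v h, j))%:R *: l - (q == (v, h + j))%:R *: l].

Definition R2 : {vspace P2} := <<[seq relE p | p : (E * I * I)%type]>>%VS.
Definition R1 : {vspace P1} :=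
  (<<[seq (relE p, 0%R : P1b) | p : (E * I * I)%type]>> +
   <<[seq (0%R : P1a, relV p) | p : (V * I * I * 'rV[F2]_m)%type]>>)%VS.
Definition R0 : {vspace P0} :=
  <<[seq relV p | p : (V * I * I * 'rV[F2]_m)%type]>>%VS.

(* differential of the total complex, induced by del (x) id + id (x) del^C;
   the edge j of C_l has boundary j + (j+1). *)
Definition d2 (x : P2) : P1 :=
  ([ffun q : (E * I)%type => x q + x (q.1, q.2 - Zp1)],
   [ffun q : (V * I)%type => tanner_bd ends D lab (fun e => x (e, q.2)) q.1]).

Definition d1 (y : P1) : P0 :=
  [ffun q : (V * I)%type => tanner_bd ends D lab (fun e => y.1 (e, q.2)) q.1
                     + y.2 q + y.2 (q.1, q.2 - Zp1)].

(* cycles and boundaries of T_1 = P1 / R1, lifted to P1 *)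
Definition Z1 : {vspace P1} := (linfun d1 @^-1: R0)%VS.
Definition B1 : {vspace P1} := (limg (linfun d2) + R1)%VS.
(* lifts of classes having a representative (u, 0) *)
Definition Z1h : {vspace P1} :=
  (Z1 :&: limg (linfun (fun u : P1a => (u, 0%R : P1b))))%VS.

Definition dim_horizontal_homology : nat := (\dim (Z1h + B1) - \dim B1)%N.

End BalancedProduct.

Definition dim_ker_quotient_tanner (n : nat) (V E : finType) (ends : E -> V * V)
    (actV : V -> 'I_n.+1 -> V) (actE : E -> 'I_n.+1 -> E)
    (s m : nat) (D : 'M[F2]_(s, m)) (lab : V -> E -> 'I_s) : nat :=
  \dim (lker (linfun (tanner_map (@quot_ends n V E ends actV actE) D
                                 (@quot_lab n V E ends actV actE s lab)))).

(* Write pi : C_1(X) (x) C_0(C_l) -> C_1(X), (e, k) |-> e.(-k), for the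
   coinvariant projection (it kills the balancing relations, so it is the
   identification C_1(X) (x)_H C_0(C_l) = C_1(X)), S for the shift e |-> e.(-1)
   and N = sum_h (. h) for the norm of the H-action.  The map
     Theta (u, w) = N (pi u)
   is defined on the lifts P_1 of T_1 and the proof consists of three facts:
   - Theta kills the boundaries B_1 (pi of a horizontal boundary is z + S z,
     and N (z + S z) = 2 N z = 0 in characteristic 2);
   - conversely, on the horizontal cycles Z_1^h, Theta y = 0 forces y to be a
     boundary: since l is odd, N z = 0 gives z = w + S w for an explicit w;
   - Theta (Z_1^h) is the space of H-invariant Tanner cycles of X, which the
     lift along X -> X/H identifies with ker (C(X/H, L, Lambdabar)).
   The theorem is then the rank-nullity count dim (Z + B) - dim B = dim Theta(Z)
   for a map whose kernel on Z is exactly Z :&: B. *)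

From HB Require Import structures.
From mathcomp Require Import all_boot all_algebra zify.
Set Implicit Arguments. Unset Strict Implicit. Unset Printing Implicit Defensive.
Import GRing.Theory.
Local Open Scope ring_scope.

Lemma F2_addxx (x : F2) : x + x = 0.
Proof. by rewrite -mulr2n -mulr_natr (_ : 2%:R = 0 :> F2) ?mulr0 //; apply/eqP. Qed.

Lemma F2_opp (x : F2) : - x = x.
Proof. by apply/eqP; rewrite eq_sym -subr_eq0 opprK F2_addxx. Qed.

Lemma F2_mulrn_odd (a : F2) k : odd k -> a *+ k = a.
Proof.
move=> odd_k; rewrite -[k]odd_double_half odd_k mulrnDr mulr1n -mul2n mulrnA.
by rewrite mulr2n F2_addxx mul0rn addr0.
Qed.

Lemma ffun_F2_addxx (T : finType) (x : {ffun T -> F2^o}) : x + x = 0.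
Proof. by apply/ffunP => t; rewrite !ffunE F2_addxx. Qed.

Lemma linfun_linear (K : fieldType) (aT rT : vectType K) (f : aT -> rT) :
  (forall a x y, f (a *: x + y) = a *: f x + f y) -> linfun f =1 f.
Proof.
move=> f_lin.
pose lf : {linear aT -> rT} := HB.pack f (GRing.isLinear.Build K aT rT *:%R f f_lin).
exact: (lfunE lf).
Qed.

(* If f vanishes on Z exactly on Z :&: B, then f maps (Z + B)/B isomorphically
   onto f(Z): this is how the homology count is turned into an image. *)
Lemma dim_sum_quotient (K : fieldType) (vT wT : vectType K)
    (Z B : {vspace vT}) (f : 'Hom(vT, wT)) :
  (Z :&: lker f)%VS = (Z :&: B)%VS -> (\dim (Z + B) - \dim B)%N = \dim (f @: Z).
Proof.
move=> kerZ; have := dimv_sum_cap Z B; have := limg_ker_dim f Z.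
rewrite kerZ; lia.
Qed.

Section Orbits.
Variables (n : nat) (T : finType) (act : T -> 'I_n.+1 -> T).
Hypothesis act_right : is_right_action act.

Lemma act0 x : act x 0 = x. Proof. by case: act_right. Qed.
Lemma actA x g h : act (act x g) h = act x (g + h). Proof. by case: act_right. Qed.
Lemma actK h : cancel (act^~ h) (act^~ (- h)).
Proof. by move=> x; rewrite actA subrr act0. Qed.
Lemma actKV h : cancel (act^~ (- h)) (act^~ h).
Proof. by move=> x; rewrite actA addNr act0. Qed.
Lemma act_eq x y h : (act x (- h) == y) = (x == act y h).
Proof. by apply/eqP/eqP => [<-|->]; [rewrite actKV | rewrite actK]. Qed.

Lemma orbit_act x h : orbit_of act (act x h) = orbit_of act x.
Proof.
apply/setP => y; apply/imsetP/imsetP => [[g _ ->]|[g _ ->]].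
  by exists (h + g) => //; rewrite actA.
by exists (- h + g) => //; rewrite actA addrA subrr add0r.
Qed.

Lemma orbit_cls_eq x y : orbit_cls act x = orbit_cls act y <-> exists h, x = act y h.
Proof.
split => [/(congr1 val) /= eq_orb|[h ->]]; last by apply: val_inj; rewrite /= orbit_act.
have : x \in orbit_of act y by rewrite -eq_orb; apply/imsetP; exists 0; rewrite ?act0.
by case/imsetP => h _ ->; exists h.
Qed.

Lemma orbit_rep_mem (q : orbits_type act) : orbit_rep q \in val q.
Proof.
rewrite /orbit_rep; case: pickP => [x //|q0]; exfalso.
have /eqP := xchooseP (existsP (valP q)); move: (xchoose _) => y q_y.
by move: (q0 y); rewrite /= q_y; case/negP; apply/imsetP; exists 0; rewrite ?act0.
Qed.

Lemma orbit_cls_rep (q : orbits_type act) : orbit_cls act (orbit_rep q) = q.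
Proof.
have [y /eqP q_y] := existsP (valP q).
have /imsetP [h _ ->] : orbit_rep q \in orbit_of act y by rewrite -q_y orbit_rep_mem.
by apply: val_inj; rewrite /= orbit_act q_y.
Qed.

Lemma orbit_rep_cls x : exists h, orbit_rep (orbit_cls act x) = act x h.
Proof. by have /imsetP [h _ ->] := orbit_rep_mem (orbit_cls act x); exists h. Qed.

End Orbits.

Section TannerBoundary.
Variables (V E : finType) (ends : E -> V * V) (s m : nat)
  (D : 'M[F2]_(s, m)) (lab : V -> E -> 'I_s).

Local Notation tb x v := (tanner_bd ends D lab x v).

Lemma tanner_bd_incident x v : (forall e, (ends e).1 != (ends e).2) ->
  tb x v = \sum_(e in incident ends v) x e *: row (lab v e) D.
Proof.
move=> loopless; rewrite /tanner_bd [RHS](bigID (fun e => (ends e).1 == v)) /=.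
congr (_ + _); apply: eq_bigl => e; rewrite !inE.
  by case: ((ends e).1 == v); case: ((ends e).2 == v).
case: eqP => [<-|]; last by case: ((ends e).1 == v).
by rewrite (negbTE (loopless e)).
Qed.

Lemma tanner_bd_ext x y v : x =1 y -> tb x v = tb y v.
Proof. by move=> eq_xy; rewrite /tanner_bd; congr (_ + _); apply: eq_bigr => e _; rewrite eq_xy. Qed.

Lemma tanner_bd_linear a x y v :
  tb (fun e => a * x e + y e) v = a *: tb x v + tb y v.
Proof.
rewrite /tanner_bd scalerDr !scaler_sumr addrACA -!big_split /=.
by congr (_ + _); apply: eq_bigr => e _; rewrite scalerDl scalerA.
Qed.

Lemma tanner_bd0 v : tb (fun _ => 0) v = 0.
Proof. by rewrite /tanner_bd !big1 ?addr0 // => e _; rewrite scale0r. Qed.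

Lemma tanner_bdZ c x v : tb (fun e => c * x e) v = c *: tb x v.
Proof.
rewrite -[RHS]addr0 -(tanner_bd0 v) -tanner_bd_linear.
by apply: tanner_bd_ext => e; rewrite addr0.
Qed.

Lemma tanner_bd_sum (J : Type) (r : seq J) (P : pred J) (f : J -> E -> F2) v :
  tb (fun e => \sum_(i <- r | P i) f i e) v = \sum_(i <- r | P i) tb (f i) v.
Proof.
elim: r => [|i r IHr].
  by rewrite big_nil -(tanner_bd0 v); apply: tanner_bd_ext => e; rewrite big_nil.
rewrite big_cons -IHr; case Pi: (P i).
  rewrite -[tb (f i) v]scale1r -tanner_bd_linear.
  by apply: tanner_bd_ext => e; rewrite big_cons Pi mul1r.
by apply: tanner_bd_ext => e; rewrite big_cons Pi.
Qed.

Lemma tanner_map_linear : linfun (tanner_map ends D lab) =1 tanner_map ends D lab.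
Proof.
apply: linfun_linear => a x y; apply/ffunP => v; rewrite !ffunE -tanner_bd_linear.
by apply: tanner_bd_ext => e; rewrite !ffunE.
Qed.

End TannerBoundary.

Arguments tanner_bd_ext {V E ends s m D lab} [x y] v.

Section BalancedProductHomology.
Variables (n : nat) (V E : finType) (ends : E -> V * V)
  (actV : V -> 'I_n.+1 -> V) (actE : E -> 'I_n.+1 -> E)
  (s m : nat) (D : 'M[F2]_(s, m)) (lab : V -> E -> 'I_s).
Hypotheses (odd_l : odd n.+1)
  (actV_right : is_right_action actV) (actE_right : is_right_action actE)
  (actV_free : free_action actV) (equivariant : graph_action ends actV actE)
  (no_orbit : no_orbit_edge ends actV) (lab_inv : H_invariant_labeling ends actV actE lab).

Local Notation I := 'I_n.+1.
Local Notation tb x v := (tanner_bd ends D lab x v).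
Local Notation actV0 := (act0 actV_right).
Local Notation actVA := (actA actV_right).
Local Notation actVK := (actK actV_right).
Local Notation actVKV := (actKV actV_right).
Local Notation actE0 := (act0 actE_right).
Local Notation actEA := (actA actE_right).
Local Notation actEK := (actK actE_right).
Local Notation actEKV := (actKV actE_right).

Lemma loopless e : (ends e).1 != (ends e).2.
Proof. by apply/eqP => loop; have := @no_orbit e 0; rewrite actV0 loop. Qed.

Lemma no_orbit_rev e h : (ends e).1 <> actV (ends e).2 h.
Proof. by move=> orb; have := @no_orbit e (- h); rewrite orb actVK. Qed.

Lemma incident_act e v h :
  (actE e h \in incident ends (actV v h)) = (e \in incident ends v).
Proof.
have eqh (a : V) : (actV a h == actV v h) = (a == v) by rewrite (inj_eq (can_inj (actVK h))).
by rewrite !inE; case: (equivariant e h) => ->; rewrite /= !eqh // orbC.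
Qed.

Lemma tbE x v : tb x v = \sum_(e in incident ends v) x e *: row (lab v e) D.
Proof. exact: tanner_bd_incident loopless. Qed.

Lemma tanner_bd_act x h v : tb (fun e => x (actE e h)) v = tb x (actV v h).
Proof.
rewrite !tbE [RHS](reindex (actE^~ h)) /=; last first.
  by exists (actE^~ (- h)) => e _; [apply: actEK | apply: actEKV].
by apply: eq_big => [e|e inc_e]; rewrite ?incident_act ?lab_inv.
Qed.

Definition coinvE (u : {ffun (E * I)%type -> F2^o}) : {ffun E -> F2^o} :=
  [ffun e => \sum_k u (actE e (- k), k)].
Definition coinvV (f : {ffun (V * I)%type -> 'rV[F2]_m}) : {ffun V -> 'rV[F2]_m} :=
  [ffun v => \sum_k f (actV v (- k), k)].

Definition at_zero (x : {ffun E -> F2^o}) : {ffun (E * I)%type -> F2^o} :=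
  [ffun q => (q.2 == 0)%:R * x q.1].

Definition shift (x : {ffun E -> F2^o}) : {ffun E -> F2^o} :=
  [ffun e => x (actE e (- Zp1))].
Definition norm (x : {ffun E -> F2^o}) : {ffun E -> F2^o} :=
  [ffun e => \sum_h x (actE e h)].

Lemma coinvE_at_zero x : coinvE (at_zero x) = x.
Proof.
apply/ffunP => e; rewrite ffunE (bigD1 0) //= big1 => [|k k0]; last first.
  by rewrite ffunE /= (negbTE k0) mul0r.
by rewrite ffunE /= mul1r oppr0 actE0 addr0.
Qed.

Lemma coinvE_rel p : coinvE (relE actE p) = 0.
Proof.
case: p => [[a j] h]; apply/ffunP => e; rewrite !ffunE.
have ind (b : E) (i : I) : \sum_k (((actE e (- k), k) == (b, i))%:R : F2) = (e == actE b i)%:R.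
  rewrite (bigD1 i) //= big1 => [|k ki]; last by rewrite xpair_eqE (negbTE ki) andbF.
  by rewrite xpair_eqE eqxx andbT addr0 (act_eq actE_right).
under eq_bigr do rewrite ffunE.
by rewrite sumrB !ind actEA subrr.
Qed.

Lemma coinvV_rel p : coinvV (relV actV p) = 0.
Proof.
case: p => [[[a j] h] l]; apply/ffunP => v; rewrite !ffunE.
have ind (b : V) (i : I) :
    \sum_k (((actV v (- k), k) == (b, i))%:R *: l) = (v == actV b i)%:R *: l.
  rewrite (bigD1 i) //= big1 => [|k ki]; last by rewrite xpair_eqE (negbTE ki) andbF scale0r.
  by rewrite xpair_eqE eqxx andbT addr0 (act_eq actV_right).
under eq_bigr do rewrite ffunE.
by rewrite sumrB !ind actVA subrr.
Qed.

Lemma coinvE_cycle_bd (y : {ffun (E * I)%type -> F2^o}) :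
  coinvE [ffun q : (E * I)%type => y q + y (q.1, q.2 - Zp1)] = coinvE y + shift (coinvE y).
Proof.
apply/ffunP => e; rewrite !ffunE.
under eq_bigr do rewrite ffunE /=.
rewrite big_split /=; congr (_ + _).
rewrite (reindex_inj (addIr Zp1)) /=; apply: eq_bigr => k _.
by rewrite addrK actEA opprD addrC.
Qed.

Lemma sub_at_zero_rel (u : {ffun (E * I)%type -> F2^o}) :
  u - at_zero (coinvE u) = \sum_(p : (E * I)%type) (- u p) *: relE actE (p.1, 0, p.2).
Proof.
apply/ffunP => [[e j]]; rewrite sum_ffunE !ffunE /=.
have diag : \sum_(p : (E * I)%type) u p * ((e, j) == (p.1, p.2 + 0))%:R = u (e, j).
  rewrite (bigD1 (e, j)) //= addr0 eqxx mulr1 big1 ?addr0 // => [[a k]] /= ne_p.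
  by rewrite addr0 eq_sym (negbTE ne_p) mulr0.
have moved : \sum_(p : (E * I)%type) u p * ((e, j) == (actE p.1 p.2, 0))%:R =
    (j == 0)%:R * \sum_(k < n.+1) u (actE e (- k), k).
  transitivity (\sum_(a : E) \sum_(k : I) u (a, k) * ((e, j) == (actE a k, 0))%:R).
    by rewrite pair_bigA; apply: eq_bigr => [[a k]].
  rewrite exchange_big mulr_sumr; apply: eq_bigr => k _.
  rewrite (bigD1 (actE e (- k))) //= big1 ?addr0 => [|a ne_a]; last first.
    by rewrite xpair_eqE -(act_eq actE_right) eq_sym (negbTE ne_a) mulr0.
  by rewrite xpair_eqE actEKV eqxx /= mulrC.
rewrite -diag -moved -sumrB; apply: eq_bigr => p _; rewrite !ffunE.
by rewrite scalerBr !scaleNr opprK addrC.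
Qed.

Lemma sub_at_zero_span (u : {ffun (E * I)%type -> F2^o}) :
  u - at_zero (coinvE u) \in <<[seq relE actE p | p : (E * I * I)%type]>>%VS.
Proof.
rewrite sub_at_zero_rel; apply: memv_suml => p _; apply/memvZ/memv_span.
by apply/mapP; exists (p.1, 0, p.2); rewrite ?mem_enum.
Qed.

Lemma norm_add x y : norm (x + y) = norm x + norm y.
Proof. by apply/ffunP => e; rewrite !ffunE -big_split; apply: eq_bigr => h _; rewrite ffunE. Qed.

Lemma norm_shift x : norm (shift x) = norm x.
Proof.
apply/ffunP => e; rewrite !ffunE [RHS](reindex_inj (addIr (- Zp1))) /=.
by apply: eq_bigr => h _; rewrite ffunE actEA.
Qed.

Lemma norm_act x e h : norm x (actE e h) = norm x e.
Proof.
rewrite !ffunE [RHS](reindex_inj (addrI h)) /=.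
by apply: eq_bigr => g _; rewrite actEA.
Qed.

Lemma gen_mul_inj : injective (fun i : I => (- Zp1 : I) *+ i).
Proof.
move=> i j /= /eqP; rewrite !mulNrn eqr_opp !Zp_mulrn => /eqP /(congr1 val) /=.
by rewrite !modnMml !mul1n !modn_small // => eq_ij; apply: val_inj.
Qed.

Definition alt_sum (z : {ffun E -> F2^o}) : {ffun E -> F2^o} :=
  [ffun e => \sum_(i < n.+1) (odd i)%:R * z (actE e ((- Zp1) *+ i))].

(* Since l is odd, every chain of norm zero is of the form w + shift w. *)
Lemma norm0_shift_bd z : norm z = 0 -> alt_sum z + shift (alt_sum z) = z.
Proof.
move=> norm_z; apply/ffunP => e; rewrite !ffunE.
have orbit_sum : \sum_(i < n.+1) z (actE e ((- Zp1) *+ i)) = 0.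
  by move/ffunP: norm_z => /(_ e); rewrite !ffunE (reindex_inj gen_mul_inj).
rewrite big_ord_recl /= mulr0n actE0 in orbit_sum.
under [X in _ + X = _]eq_bigr do rewrite actEA -mulrS.
rewrite big_ord_recl big_ord_recr /= mul0r add0r.
have -> : odd n = false by move: odd_l => /= /negPf.
rewrite mul0r addr0 -big_split /=.
rewrite (eq_bigr (fun i : 'I_n => z (actE e ((- Zp1) *+ i.+1)))); last first.
  move=> i _; rewrite /bump /= add1n -mulrDl.
  by case: (odd i) => /=; rewrite ?add0r ?addr0 mul1r.
by move/eqP: orbit_sum; rewrite addrC addr_eq0 F2_opp => /eqP.
Qed.

Lemma d1_linear : linfun (@d1 n V E ends s m D lab) =1 @d1 n V E ends s m D lab.
Proof.
apply: linfun_linear => a y z; apply/ffunP => q; rewrite /d1 !ffunE /=.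
rewrite -(tanner_bd_ext (x := fun e => a * y.1 (e, q.2) + z.1 (e, q.2))); last first.
  by move=> e; rewrite !ffunE.
have regroup (A B C A' B' C' : 'rV[F2]_m) :
    a *: A + A' + (a *: B + B') + (a *: C + C') = a *: (A + B + C) + (A' + B' + C').
  by rewrite !scalerDr [a *: A + A' + _]addrACA [_ + (A' + B') + _]addrACA.
by rewrite tanner_bd_linear regroup.
Qed.

Lemma d2_linear : linfun (@d2 n V E ends s m D lab) =1 @d2 n V E ends s m D lab.
Proof.
apply: linfun_linear => a y z; rewrite /d2 /=; congr (_, _); apply/ffunP => q; rewrite !ffunE.
  by rewrite scalerDr addrACA.
rewrite -(tanner_bd_ext (x := fun e => a * y (e, q.2) + z (e, q.2))) ?tanner_bd_linear //.
by move=> e; rewrite !ffunE.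
Qed.

Lemma coinvV_linear : linfun coinvV =1 coinvV.
Proof.
apply: linfun_linear => a y z; apply/ffunP => v; rewrite !ffunE scaler_sumr -big_split /=.
by apply: eq_bigr => k _; rewrite !ffunE.
Qed.

Lemma horizontal_linear : linfun (fun u : P1a n E => (u, 0 : P1b n V m)) =1 (fun u => (u, 0)).
Proof. by apply: linfun_linear => a y z; congr (_, _); rewrite /= scaler0 addr0. Qed.

Definition theta (y : P1 n V E m) : {ffun E -> F2^o} := norm (coinvE y.1).

Lemma theta_linear : linfun theta =1 theta.
Proof.
apply: linfun_linear => a y z; apply/ffunP => e; rewrite !ffunE /= scaler_sumr -big_split /=.
apply: eq_bigr => h _; rewrite !ffunE scaler_sumr -big_split /=.
by apply: eq_bigr => k _; rewrite !ffunE.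
Qed.

Lemma coinvV_R0 f : f \in R0 actV m -> coinvV f = 0.
Proof.
move=> R0f; suff : f \in lker (linfun coinvV) by rewrite memv_ker coinvV_linear => /eqP.
move: f R0f; apply/subvP/span_subvP => f /mapP [p _ ->].
by rewrite memv_ker coinvV_linear coinvV_rel.
Qed.

Lemma theta_R1 y : y \in R1 actV actE m -> theta y = 0.
Proof.
have norm0 : norm 0 = 0 by apply/ffunP => e; rewrite !ffunE big1 // => h _; rewrite ffunE.
move=> R1y; suff : y \in lker (linfun theta) by rewrite memv_ker theta_linear => /eqP.
move: y R1y; apply/subvP; rewrite subv_add; apply/andP.
split; apply/span_subvP => y /mapP [p _ ->]; rewrite memv_ker theta_linear /theta /=.
  by rewrite coinvE_rel norm0.
suff -> : coinvE 0 = 0 by rewrite norm0.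
by apply/ffunP => e; rewrite !ffunE big1 // => h _; rewrite ffunE.
Qed.

(* Theta kills horizontal boundaries since N (z + S z) = 2 N z = 0. *)
Lemma theta_d2 y : theta (d2 ends D lab y) = 0.
Proof. by rewrite /theta /= coinvE_cycle_bd norm_add norm_shift ffun_F2_addxx. Qed.

Lemma theta_B1 y : y \in B1 ends actV actE D lab -> theta y = 0.
Proof.
case/memv_addP => [_ /memv_imgP [x _ ->] [r R1r ->]].
by rewrite -theta_linear linearD /= !theta_linear d2_linear theta_d2 theta_R1 // add0r.
Qed.

Lemma coinvV_d1 (u : P1a n E) :
  coinvV (d1 ends D lab (u, 0)) = [ffun v => tb (fun e => coinvE u e) v].
Proof.
apply/ffunP => v; rewrite !ffunE.
under eq_bigr do rewrite !ffunE /= !addr0 -tanner_bd_act.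
by rewrite -tanner_bd_sum; apply: tanner_bd_ext => e; rewrite ffunE.
Qed.

Lemma Z1h_coinv y : y \in Z1h ends actV D lab ->
  exists u, y = (u, 0) /\ forall v, tb (fun e => coinvE u e) v = 0.
Proof.
case/memv_capP => Z1y /memv_imgP [u _ y_eq]; rewrite horizontal_linear in y_eq; subst y.
exists u; split => // v; rewrite -memv_preim d1_linear in Z1y.
by have /ffunP/(_ v) := coinvV_R0 Z1y; rewrite coinvV_d1 !ffunE.
Qed.

Lemma at_zero_Z1h (x : {ffun E -> F2^o}) : (forall v, tb (fun e => x e) v = 0) ->
  (at_zero x, 0) \in Z1h ends actV D lab.
Proof.
move=> cycle_x; rewrite memv_cap; apply/andP; split; last first.
  by rewrite -(horizontal_linear (at_zero x)); apply/memv_img/memvf.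
rewrite -memv_preim d1_linear.
suff -> : d1 ends D lab (at_zero x, 0) = 0 by rewrite mem0v.
apply/ffunP => q; rewrite !ffunE /= !addr0.
rewrite -(tanner_bd_ext (x := fun e => (q.2 == 0)%:R * x e)); last by move=> e; rewrite ffunE.
by rewrite tanner_bdZ cycle_x scaler0.
Qed.

Lemma same_coinv_R1 (u u' : P1a n E) : coinvE u = coinvE u' ->
  ((u - u', 0) : P1 n V E m) \in R1 actV actE m.
Proof.
move=> eq_coinv; rewrite -[X in X \in _]addr0; apply: memv_add (mem0v _).
have -> : u - u' = (u - at_zero (coinvE u)) - (u' - at_zero (coinvE u')).
  by rewrite eq_coinv opprB addrA subrK.
have /memv_img := memvB (sub_at_zero_span u) (sub_at_zero_span u').
move/(_ _ (linfun (fun u : P1a n E => (u, 0 : P1b n V m)))).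
rewrite horizontal_linear limg_span; apply/subvP/span_subvP => _ /mapP [_ /mapP [p _ ->] ->].
by rewrite horizontal_linear; apply: memv_span; apply/mapP; exists p; rewrite ?mem_enum.
Qed.

Lemma d2_at_zero_horizontal (w : {ffun E -> F2^o}) : (forall v, tb (fun e => w e) v = 0) ->
  d2 ends D lab (at_zero w) = ((d2 ends D lab (at_zero w)).1, 0).
Proof.
move=> cycle_w; congr (_, _); apply/ffunP => q; rewrite !ffunE.
rewrite -(tanner_bd_ext (x := fun e => (q.2 == 0)%:R * w e)); last by move=> e; rewrite ffunE.
by rewrite tanner_bdZ cycle_w scaler0.
Qed.

(* Key step, using that l is odd: a horizontal cycle killed by Theta is a
   boundary, namely the boundary of the alternating sum of its coinvariant. *)
Lemma theta0_B1 y : y \in Z1h ends actV D lab -> theta y = 0 ->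
  y \in B1 ends actV actE D lab.
Proof.
case/Z1h_coinv => u [-> cycle_u]; rewrite /theta /= => norm0.
set w := alt_sum (coinvE u).
have cycle_w v : tb (fun e => w e) v = 0.
  rewrite -(tanner_bd_ext (x := fun e => \sum_(i < n.+1)
       (odd i)%:R * coinvE u (actE e ((- Zp1) *+ i)))); last by move=> e; rewrite ffunE.
  rewrite tanner_bd_sum big1 // => i _.
  by rewrite tanner_bdZ tanner_bd_act cycle_u scaler0.
set b := d2 ends D lab (at_zero w).
have coinv_b : coinvE b.1 = coinvE u by rewrite /= coinvE_cycle_bd coinvE_at_zero norm0_shift_bd.
have -> : ((u, 0) : P1 n V E m) = b + (u - b.1, 0).
  rewrite /b d2_at_zero_horizontal //; apply: injective_projections => /=.
    by rewrite addrC subrK.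
  by rewrite addr0.
apply: memv_add; first by rewrite /b -d2_linear; apply/memv_img/memvf.
by apply: same_coinv_R1; rewrite coinv_b.
Qed.

Definition invariant_cycle (x : {ffun E -> F2^o}) : Prop :=
  (forall v, tb (fun e => x e) v = 0) /\ (forall e h, x (actE e h) = x e).

(* Theta maps the horizontal cycles onto the invariant Tanner cycles; here
   surjectivity uses that l is odd, so that N x = l x = x for invariant x. *)
Lemma theta_image x :
  x \in (linfun theta @: Z1h ends actV D lab)%VS <-> invariant_cycle x.
Proof.
split=> [/memv_imgP [y /Z1h_coinv [u [-> cycle_u]] ->]|[cycle_x inv_x]].
  rewrite theta_linear /theta /=; split => [v|e h]; last exact: norm_act.
  rewrite -(tanner_bd_ext (x := fun e => \sum_h coinvE u (actE e h))); last first.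
    by move=> e; rewrite ffunE.
  by rewrite tanner_bd_sum big1 // => h _; rewrite tanner_bd_act cycle_u.
have -> : x = linfun theta (at_zero x, 0).
  rewrite theta_linear /theta /= coinvE_at_zero; apply/ffunP => e; rewrite ffunE.
  under eq_bigr do rewrite inv_x.
  by rewrite sumr_const card_ord F2_mulrn_odd.
exact/memv_img/at_zero_Z1h.
Qed.

Local Notation qends := (@quot_ends n V E ends actV actE).
Local Notation qlab := (@quot_lab n V E ends actV actE s lab).

Lemma ends_orbits_neq e : orbit_cls actV (ends e).1 != orbit_cls actV (ends e).2.
Proof. by apply/eqP => /(orbit_cls_eq actV_right) [h orb]; apply: (no_orbit_rev orb). Qed.

Lemma incident_end1 e w : e \in incident ends w ->
  orbit_cls actV (ends e).1 == orbit_cls actV w -> (ends e).1 = w.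
Proof.
rewrite inE => /orP [/eqP //|/eqP end2] /eqP end1; exfalso.
by move: (ends_orbits_neq e); rewrite end1 end2 eqxx.
Qed.

Lemma incident_end2 e w : e \in incident ends w ->
  orbit_cls actV (ends e).1 != orbit_cls actV w -> (ends e).2 = w.
Proof. by rewrite inE => /orP [/eqP end1|/eqP //]; rewrite end1 eqxx. Qed.

Lemma quot_lab_cls v e : e \in incident ends v ->
  qlab (orbit_cls actV v) (orbit_cls actE e) = lab v e.
Proof.
move=> inc_e; rewrite /quot_lab; have [h ->] := orbit_rep_cls actE_right e.
have inc_eh : actE e h \in incident ends (actV v h) by rewrite incident_act.
have cls_vh : orbit_cls actV (actV v h) = orbit_cls actV v.
  by apply/(orbit_cls_eq actV_right); exists h.
case: ifP => end1.
  by rewrite (incident_end1 inc_eh) ?cls_vh ?end1 // lab_inv.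
by rewrite (incident_end2 inc_eh) ?cls_vh ?end1 // lab_inv.
Qed.

(* Freeness on vertices: no two edges at v are in the same edge orbit. *)
Lemma incident_orbit_trivial e v h :
  e \in incident ends v -> actE e h \in incident ends v -> h = 0.
Proof.
move=> inc_e; rewrite -{1}(actVKV h v) incident_act => inc_eh.
have [fix_v|moved] := eqVneq (actV v (- h)) v.
  by apply/eqP; rewrite -oppr_eq0; apply/eqP; apply: actV_free fix_v.
exfalso; move: inc_e inc_eh; rewrite !inE => /orP[]/eqP end_e /orP[]/eqP end_eh;
  first [ by move: moved; rewrite -end_eh end_e eqxx
        | by apply: (@no_orbit e (- h)); rewrite end_e end_eh
        | by apply: (@no_orbit_rev e (- h)); rewrite end_e end_eh ].
Qed.

Lemma orbit_cls_incident_inj v : {in incident ends v &, injective (orbit_cls actE)}.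
Proof.
move=> e e' inc_e inc_e' /(orbit_cls_eq actE_right) [h e_eq]; subst e.
by rewrite (incident_orbit_trivial inc_e' inc_e) actE0.
Qed.

Lemma quot_incident v :
  incident qends (orbit_cls actV v) = orbit_cls actE @: incident ends v.
Proof.
apply/setP => q; rewrite inE /quot_ends /=; apply/idP/imsetP.
  set r := orbit_rep q.
  have lift_inc w : orbit_cls actV w = orbit_cls actV v -> r \in incident ends w ->
      exists2 e, e \in incident ends v & q = orbit_cls actE e.
    move=> /(orbit_cls_eq actV_right) [h ->] inc_r; exists (actE r (- h)).
      by rewrite -(incident_act (actE r (- h)) v h) actEKV.
    rewrite -(orbit_cls_rep actE_right q) -/r; apply/(orbit_cls_eq actE_right).
    by exists h; rewrite actEKV.
  by case/orP => /eqP cls_end; apply: lift_inc cls_end _; rewrite inE eqxx ?orbT.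
case=> e inc_e ->; have [h ->] := orbit_rep_cls actE_right e.
have cls_vh : orbit_cls actV (actV v h) = orbit_cls actV v.
  by apply/(orbit_cls_eq actV_right); exists h.
have : actE e h \in incident ends (actV v h) by rewrite incident_act.
by rewrite inE => /orP [] /eqP ->; rewrite cls_vh eqxx ?orbT.
Qed.

Definition lift (xb : {ffun orbits_type actE -> F2^o}) : {ffun E -> F2^o} :=
  [ffun e => xb (orbit_cls actE e)].

Lemma lift_linear : linfun lift =1 lift.
Proof. by apply: linfun_linear => a x y; apply/ffunP => e; rewrite !ffunE. Qed.

Lemma lift_injective : lker (linfun lift) == 0%VS.
Proof.
apply/lker0P => x y; rewrite !lift_linear => /ffunP eq_lift; apply/ffunP => q.
by move: (eq_lift (orbit_rep q)); rewrite !ffunE orbit_cls_rep.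
Qed.

Lemma quot_tanner_lift (xb : {ffun orbits_type actE -> F2^o}) v :
  tanner_map qends D qlab xb (orbit_cls actV v) = tb (fun e => lift xb e) v.
Proof.
rewrite ffunE tanner_bd_incident; last by move=> q; apply: ends_orbits_neq.
rewrite quot_incident big_imset /=; last exact: orbit_cls_incident_inj.
by rewrite tbE; apply: eq_bigr => e inc_e; rewrite quot_lab_cls ?ffunE.
Qed.

Lemma lift_quot_ker :
  (linfun lift @: lker (linfun (tanner_map qends D qlab)) =
   linfun theta @: Z1h ends actV D lab)%VS.
Proof.
have lift_act xb e h : lift xb (actE e h) = lift xb e.
  by rewrite !ffunE; congr (xb _); apply/(orbit_cls_eq actE_right); exists h.
apply/vspaceP => x; apply/idP/idP => [|/theta_image [cycle_x inv_x]].
  case/memv_imgP => xb; rewrite memv_ker tanner_map_linear lift_linear => /eqP ker_xb ->.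
  apply/theta_image; split=> [v|]; last exact: lift_act.
  by rewrite -quot_tanner_lift ker_xb ffunE.
pose xb : {ffun orbits_type actE -> F2^o} := [ffun q => x (orbit_rep q)].
have <- : lift xb = x.
  by apply/ffunP => e; rewrite !ffunE; have [h ->] := orbit_rep_cls actE_right e.
rewrite -lift_linear; apply: memv_img; rewrite memv_ker tanner_map_linear.
apply/eqP/ffunP => q; rewrite -(orbit_cls_rep actV_right q) quot_tanner_lift ffunE.
rewrite -[RHS](cycle_x (orbit_rep q)); apply: tanner_bd_ext => e.
by rewrite !ffunE; have [h ->] := orbit_rep_cls actE_right e; rewrite inv_x.
Qed.

Lemma Z1h_ker_theta :
  (Z1h ends actV D lab :&: lker (linfun theta) =
   Z1h ends actV D lab :&: B1 ends actV actE D lab)%VS.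
Proof.
apply/vspaceP => y; apply/memv_capP/memv_capP => [[Zy Ky]|[Zy By]]; split => //.
  by move: Ky; rewrite memv_ker theta_linear => /eqP; apply: theta0_B1.
by rewrite memv_ker theta_linear; apply/eqP; apply: theta_B1.
Qed.

End BalancedProductHomology.

Theorem mainTheorem11 (n : nat) (V E : finType) (ends : E -> V * V)
    (actV : V -> 'I_n.+1 -> V) (actE : E -> 'I_n.+1 -> E)
    (s m : nat) (D : 'M[F2]_(s, m)) (lab : V -> E -> 'I_s) :
  odd n.+1 ->
  s_regular ends s ->
  is_right_action actV -> is_right_action actE ->
  free_action actV -> free_action actE ->
  graph_action ends actV actE ->
  no_orbit_edge ends actV ->
  is_labeling ends lab ->
  H_invariant_labeling ends actV actE lab ->
  dim_horizontal_homology ends actV actE D lab =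
  dim_ker_quotient_tanner ends actV actE D lab.
Proof.
move=> odd_l _ actV_right actE_right actV_free _ equivariant no_orbit _ lab_inv.
rewrite /dim_horizontal_homology /dim_ker_quotient_tanner.
rewrite (dim_sum_quotient (Z1h_ker_theta D odd_l actV_right actE_right
                            equivariant no_orbit lab_inv)).
rewrite -(lift_quot_ker D odd_l actV_right actE_right actV_free equivariant no_orbit lab_inv).
by rewrite limg_dim_eq // (eqP (lift_injective actE_right)) capv0.
Qed.
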